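(* Let $\Sigma,\Gamma$ be finite alphabets, $w\in\Sigma^{\mathbb{N}}$ an infinite word and $h:\Sigma^*\to\Gamma^*$ an injective morphism. If there exists a nonempty word $x$ such that $x^l$ is a factor of $h(w)$ for every $l\in\mathbb{N}$, then $\mathrm{ACE}(w) = \infty$.
   Context: $\mathrm{Fact}_n(w)$ is the set of length-$n$ factors of $w$. For a nonempty word $v$ and integer $p\ge0$, $v^{p/|v|}$ is the prefix of length $p$ of $vvv\cdots$. For a nonempty finite word $u$, $\mathrm{E}(u) = \sup\{ r \in \mathbb{Q} : u = v^r \text{ for some nonempty } v\}$. For an infinite word $w$, $\mathrm{ACE}(w) = \limsup_{n\to\infty}\sup\{\mathrm{E}(u) : u\in\mathrm{Fact}_n(w)\}$. *)

From mathcomp Require Import all_boot all_order all_algebra.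
From mathcomp Require Import all_classical all_reals all_analysis.
Set Implicit Arguments. Unset Strict Implicit. Unset Printing Implicit Defensive.
Import Order.TTheory GRing.Theory Num.Theory.
Local Open Scope classical_set_scope.
Local Open Scope ring_scope.

(* v^{p/|v|}: the prefix of length p of v v v ... *)
Definition wpow {T : Type} (x0 : T) (v : seq T) (p : nat) : seq T :=
  mkseq (fun i => nth x0 v (i %% size v)) p.

(* E(u) = sup { r in Q : u = v^r for some nonempty v }, as an extended real.
   u = v^r with r = p/|v| (p a natural number). *)
Definition Eexp (R : realType) {T : eqType} (u : seq T) : \bar R :=
  ereal_sup [set r : \bar R | exists (p : nat) (v : seq T) (x0 : T),
     v != [::] /\ u = wpow x0 v p /\ r = ((p%:R / (size v)%:R : R)%:E)].

Definition Fact {T : Type} (w : nat -> T) (n : nat) : set (seq T) :=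
  [set u | exists i, u = mkseq (fun j => w (i + j)) n].

Definition ACE (R : realType) {T : eqType} (w : nat -> T) : \bar R :=
  limn_esup (fun n => ereal_sup [set Eexp R u | u in Fact w n]).

Definition morph {S G : Type} (h : S -> seq G) (s : seq S) : seq G :=
  flatten (map h s).

(* x is a factor of the infinite word h(w) (the concatenation h(w0) h(w1) ...):
   equivalently, x occurs in h(w0 ... w_{n-1}) for some n. *)
Definition factor_of_image {S G : eqType} (h : S -> seq G) (w : nat -> S)
  (x : seq G) : Prop :=
  exists n, infix x (morph h (mkseq w n)).

Definition wrep {T : Type} (x : seq T) (l : nat) : seq T := flatten (nseq l x).

From mathcomp Require Import all_boot all_order all_algebra.
From mathcomp Require Import all_classical all_reals all_analysis.
From mathcomp Require Import zify.
Set Implicit Arguments. Unset Strict Implicit. Unset Printing Implicit Defensive.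
Import Order.TTheory GRing.Theory Num.Theory.

(* Let q = |x| and let p_j = |h(w_0 ... w_(j-1))| be the position in h(w) at
   which the image of w_j starts.  Consecutive p_j are at most max_a |h(a)|
   apart, so a long enough occurrence of x^l in h(w) contains many of them, each
   with a phase p_j mod q.  A double pigeonhole gives j1 < j2 <= j1 + q and
   j3 >= j1 + M q with p_j1, p_j2, p_j3 of the same phase.  The images of
   w[j1, j2) and w[j1, j3) are then powers of the same conjugate of x, so they
   commute; since h is injective, w[j1, j2) and w[j1, j3) commute too, hence
   are powers of a common word t.  As |t| <= q, the factor w[j1, j3) = t^k has
   exponent k >= M. *)

Section Words.
Variable T : Type.
Implicit Types (s t u v x : seq T).

Lemma wrepD t m n : wrep t (m + n) = wrep t m ++ wrep t n.
Proof. by elim: m => //= m IH; rewrite /wrep /= -catA -IH. Qed.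

Lemma size_wrep t n : size (wrep t n) = n * size t.
Proof. by elim: n => //= n IH; rewrite size_cat IH mulSn. Qed.

Lemma nth_wrep d t n i : i < n * size t ->
  nth d (wrep t n) i = nth d t (i %% size t).
Proof.
elim: n i => [|n IH] i; first by rewrite mul0n.
rewrite /= nth_cat mulSn => lt_i.
case: ltnP => le_ti; first by rewrite modn_small.
rewrite IH; last by rewrite ltn_subLR.
by rewrite -[in RHS](subnK le_ti) modnDr.
Qed.

Lemma wpow_wrep d t n : wpow d t (n * size t) = wrep t n.
Proof.
apply: (@eq_from_nth _ d) => [|i]; rewrite size_mkseq ?size_wrep // => lt_i.
by rewrite nth_mkseq // nth_wrep.
Qed.

Lemma nth_rot d r x i : r <= size x -> i < size x ->
  nth d (rot r x) i = nth d x ((r + i) %% size x).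
Proof.
move=> le_r lt_i; rewrite /rot nth_cat size_drop nth_drop.
case: ltnP => [lt_ir | le_i]; first by rewrite modn_small // -ltn_subRL.
rewrite nth_take; last by lia.
have -> : r + i = i - (size x - r) + size x by lia.
by rewrite modnDr modn_small //; lia.
Qed.

Lemma take_drop_wrep x l p k : p + k * size x <= l * size x ->
  take (k * size x) (drop p (wrep x l)) = wrep (rot (p %% size x) x) k.
Proof.
case: x => [|d s] le_pk; first by rewrite !muln0 take0; elim: k {le_pk}.
set x := d :: s in le_pk *; have x_gt0 : 0 < size x by [].
have size_lhs : size (take (k * size x) (drop p (wrep x l))) = k * size x.
  by rewrite size_takel // size_drop size_wrep; lia.
apply: (@eq_from_nth _ d) => [|i]; first by rewrite size_lhs size_wrep size_rot.
rewrite size_lhs => lt_i; rewrite nth_take // nth_drop !nth_wrep ?size_rot //; last by lia.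
rewrite nth_rot ?modnDm ?ltn_pmod //; exact/ltnW/ltn_pmod.
Qed.

Lemma cat_comm_wrep u v : u ++ v = v ++ u ->
  exists t m n, u = wrep t m /\ v = wrep t n.
Proof.
have [k] := ubnP (size u + size v); elim: k u v => // k IH u v lt_uv e.
wlog le_uv : u v lt_uv e / size u <= size v.
  move=> H; case: (leqP (size u) (size v)) => [|/ltnW] le; first exact: H.
  have [|t [m [n [-> ->]]]] := H v u _ (esym e) le; first by rewrite addnC.
  by exists t, n, m.
case: u => [|a u] in le_uv lt_uv e *.
  by exists v, 0, 1; rewrite /wrep /= cats0.
set u' := a :: u in le_uv lt_uv e *; set v' := drop (size u') v.
have ev : v = u' ++ v'.
  rewrite -[LHS](cat_take_drop (size u')); congr (_ ++ _).
  by have := congr1 (take (size u')) e; rewrite take_size_cat // takel_cat.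
have e' : u' ++ v' = v' ++ u'.
  by have := congr1 (drop (size u')) e; rewrite {1 2}ev -catA !drop_size_cat.
have [|t [m [n [eu ev']]]] := IH u' v' _ e'.
  by move: lt_uv; rewrite ev size_cat /=; lia.
by exists t, m, (m + n); rewrite ev eu ev' wrepD.
Qed.

End Words.

Lemma pigeonhole_nat q (f : nat -> nat) : (forall i, f i < q) ->
  exists i i', [/\ i < i', i' <= q & f i = f i'].
Proof.
move=> lt_fq; pose F (i : 'I_q.+1) : 'I_q := Ordinal (lt_fq i).
have /injectivePn [i [i' neq_ii' /(congr1 val) /= eq_f]] : ~~ injectiveb F.
  by apply/injectiveP => /leq_card; rewrite !card_ord ltnn.
case: (ltngtP i i') => [lt_ii'|lt_i'i|/ord_inj eq_ii'].
- by exists i, i'; split; rewrite // -ltnS.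
- by exists i', i; split; rewrite // -ltnS.
- by rewrite eq_ii' eqxx in neq_ii'.
Qed.

Lemma repeat_near_and_far q X s (f : nat -> nat) : (forall i, f i < q) ->
  exists j1 j2 j3, [/\ s <= j1 < j2, j2 <= j1 + q, j1 + X <= j3 + q,
    maxn j2 j3 <= s + q * X + q & f j2 = f j1 /\ f j3 = f j1].
Proof.
move=> lt_fq.
(* Pigeonhole inside each block [s + b X, s + b X + q], then across blocks. *)
have /boolp.choice [P near] : forall b, exists p : nat * nat,
    [/\ p.1 < p.2, p.2 <= q & f (s + b * X + p.1) = f (s + b * X + p.2)].
  move=> b; have [i [i' [? ? ?]]] :=
    pigeonhole_nat (f := fun i => f (s + b * X + i)) (fun i => lt_fq _).
  by exists (i, i').
have [a [a' [lt_aa' le_a'q eq_f]]] :=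
  pigeonhole_nat (f := fun b => f (s + b * X + (P b).1)) (fun b => lt_fq _).
have [lt_P1 le_P2 eq_P] := near a; have [lt_P1' le_P2' _] := near a'.
exists (s + a * X + (P a).1), (s + a * X + (P a).2), (s + a' * X + (P a').1).
have le_aX : a.+1 * X <= a' * X by rewrite leq_mul2r lt_aa' orbT.
have le_a'X : a' * X <= q * X by rewrite leq_mul2r le_a'q orbT.
rewrite mulSn in le_aX; split; [lia | lia | lia | | lia].
by rewrite geq_max; apply/andP; split; lia.
Qed.

Definition seg (T : Type) (w : nat -> T) (i k : nat) : seq T :=
  mkseq (fun j => w (i + j)) k.

Lemma mkseq_seg (T : Type) (w : nat -> T) m n :
  mkseq w (m + n) = mkseq w m ++ seg w m n.
Proof.
rewrite /seg /mkseq iotaD map_cat add0n; congr (_ ++ _).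
by rewrite -[in iota m n](addn0 m) iotaDl -map_comp.
Qed.

Lemma morph_cat (S G : Type) (h : S -> seq G) s t :
  morph h (s ++ t) = morph h s ++ morph h t.
Proof. by rewrite /morph map_cat flatten_cat. Qed.

Section ImageLengths.
Variables (S : finType) (G : Type) (h : S -> seq G) (w : nat -> S).
Hypothesis h_inj : injective (morph h).

Definition img_len j := size (morph h (mkseq w j)).

Definition hmax := \max_(a : S) size (h a).

Lemma size_h_gt0 a : 0 < size (h a).
Proof.
case ha: (h a) => [|//].
by have /h_inj : morph h [:: a] = morph h [:: a; a] by rewrite /morph /= ha.
Qed.

Lemma size_h_le a : size (h a) <= hmax.
Proof. exact: leq_bigmax. Qed.

Lemma img_lenS j : img_len j.+1 = img_len j + size (h (w j)).
Proof. by rewrite /img_len mkseqS -cats1 morph_cat size_cat /morph /= cats0. Qed.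

Lemma img_len_leq : {homo img_len : j j' / j <= j'}.
Proof.
by apply: homo_leq => [//|? ? ?|j]; [exact: leq_trans | rewrite img_lenS leq_addr].
Qed.

Lemma img_len_homo : {homo img_len : j j' / j < j'}.
Proof.
apply: homo_ltn => [? ? ?|j]; first exact: ltn_trans.
by rewrite img_lenS -addn1 leq_add2l size_h_gt0.
Qed.

Lemma img_len_mono : {mono img_len : j j' / j <= j'}.
Proof. exact/leq_mono/img_len_homo. Qed.

Lemma img_len_addn_le j k : img_len (j + k) <= img_len j + k * hmax.
Proof.
elim: k => [|k IH]; first by rewrite addn0 mul0n addn0.
by rewrite addnS img_lenS mulSn; have := size_h_le (w (j + k)); lia.
Qed.

Lemma img_len_near o n : o <= img_len n -> exists j, o <= img_len j <= o + hmax.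
Proof.
elim: n => [|n IH]; first by rewrite leqn0 => /eqP ->; exists 0.
case: (leqP o (img_len n)) => [/IH //|lt_o]; rewrite img_lenS => le_o.
by exists n.+1; rewrite img_lenS le_o; have := size_h_le (w n); lia.
Qed.

Lemma morph_mkseq_split j n : j <= n ->
  morph h (mkseq w n) = morph h (mkseq w j) ++ morph h (seg w j (n - j)).
Proof. by move=> le_jn; rewrite -morph_cat -mkseq_seg subnKC. Qed.

Lemma morph_seg j j' n : j <= j' <= n ->
  morph h (seg w j (j' - j)) =
  take (img_len j' - img_len j) (drop (img_len j) (morph h (mkseq w n))).
Proof.
move=> /andP [le_jj' le_j'n].
rewrite take_drop subnK ?img_len_leq // (morph_mkseq_split le_j'n) take_size_cat //.
by rewrite (morph_mkseq_split le_jj') drop_size_cat.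
Qed.

End ImageLengths.

Section PowerWindow.
Variables (S : finType) (G : Type) (h : S -> seq G) (w : nat -> S).
Hypothesis h_inj : injective (morph h).
Variables (n l : nat) (s1 x s2 : seq G).
Hypothesis img_n : morph h (mkseq w n) = s1 ++ wrep x l ++ s2.

Local Notation img_len := (img_len h w).

Lemma morph_seg_wrep j j' : j <= j' ->
  size s1 <= img_len j -> img_len j' <= size s1 + l * size x ->
  img_len j' = img_len j %[mod size x] ->
  morph h (seg w j (j' - j)) =
  wrep (rot ((img_len j - size s1) %% size x) x) ((img_len j' - img_len j) %/ size x).
Proof.
move=> le_jj' le_s1 le_end eq_mod.
have le_cut : img_len j <= img_len j' by apply: img_len_leq.
have le_j'n : j' <= n.
  rewrite -(img_len_mono w h_inj) {2}/img_len img_n !size_cat size_wrep; lia.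
have /divnK dvd_q : size x %| img_len j' - img_len j by rewrite -eqn_mod_dvd // eq_mod.
rewrite (@morph_seg _ _ h w j j' n) ?le_jj' // img_n take_drop catA takel_cat; last first.
  by rewrite size_cat size_wrep; lia.
rewrite -take_drop drop_cat ltnNge le_s1 /= -[in take _]dvd_q take_drop_wrep //.
lia.
Qed.

Lemma seg_comm j j2 j3 : j <= j2 -> j <= j3 -> size s1 <= img_len j ->
  img_len j2 <= size s1 + l * size x -> img_len j3 <= size s1 + l * size x ->
  img_len j2 = img_len j %[mod size x] -> img_len j3 = img_len j %[mod size x] ->
  seg w j (j2 - j) ++ seg w j (j3 - j) = seg w j (j3 - j) ++ seg w j (j2 - j).
Proof.
move=> le_j2 le_j3 le_s1 le_end2 le_end3 eq_mod2 eq_mod3.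
by apply: h_inj; rewrite !morph_cat !morph_seg_wrep // -!wrepD addnC.
Qed.

End PowerWindow.

Section LongPowers.
Variables (S : finType) (G : eqType) (h : S -> seq G) (w : nat -> S).
Hypothesis h_inj : injective (morph h).

Local Notation img_len := (img_len h w).

Lemma long_power_factor x : x != [::] ->
  (forall l, factor_of_image h w (wrep x l)) ->
  forall M, exists i t k, [/\ t != [::], M <= k & seg w i (k * size t) = wrep t k].
Proof.
move=> x_neq0 x_fac M; set q := size x.
have q_gt0 : 0 < q by rewrite lt0n size_eq0.
set X := M.+1 * q; set K := q * X + q; set l := hmax h * K.+1.
have [n /infixP [s1 [s2 img_n]]] := x_fac l.
have [j0 /andP [le_s1 le_j0]] : exists j, size s1 <= img_len j <= size s1 + hmax h.
  by apply: (@img_len_near _ _ h w _ n); rewrite /img_len img_n !size_cat; lia.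
have window j : j0 <= j <= j0 + K -> size s1 <= img_len j <= size s1 + l * q.
  case/andP => le_j0j le_jK; have le_lq : l <= l * q by rewrite leq_pmulr.
  have := img_len_leq h w le_j0j; have := img_len_leq h w le_jK.
  have := img_len_addn_le h w j0 K; lia.
have [j1 [j2 [j3 [/andP [le_j01 lt_j12] le_j21 le_j13 le_j23 [eq_mod2 eq_mod3]]]]] :=
  repeat_near_and_far X j0 (f := fun j => img_len j %% q) (fun j => ltn_pmod _ q_gt0).
have le_j13' : j1 <= j3 by move: le_j13; rewrite /X mulSn; lia.
have [w1 w2 w3] : [/\ j0 <= j1 <= j0 + K, j0 <= j2 <= j0 + K & j0 <= j3 <= j0 + K].
  by move: le_j23; rewrite geq_max /K => /andP [? ?]; split; lia.
have := seg_comm h_inj img_n (ltnW lt_j12) le_j13'.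
case/andP: (window _ w1) => le1 _; case/andP: (window _ w2) => _ le2.
case/andP: (window _ w3) => _ le3.
move=> /(_ le1 le2 le3 eq_mod2 eq_mod3) /cat_comm_wrep [t [m [k [e12 e13]]]].
have := congr1 size e12; have := congr1 size e13; rewrite !size_mkseq !size_wrep.
move=> size13 size12.
have m_gt0 : 0 < m by case: m size12 {e12} => //; lia.
have t_gt0 : 0 < size t by case: (size t) size12; lia.
have le_tq : size t <= q by rewrite (leq_trans (leq_pmull _ m_gt0)) //; lia.
exists j1, t, k; split; first by rewrite -size_eq0 -lt0n.
  rewrite -(leq_pmul2r t_gt0) (leq_trans (leq_mul (leqnn M) le_tq)) //.
  by move: le_j13; rewrite /X mulSn; lia.
by rewrite -size13 e13.
Qed.

End LongPowers.

Section ExtendedReals.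
Local Open Scope ereal_scope.
Variable R : realType.

Lemma natr_ubound_pinfty (y : \bar R) : (forall n : nat, n%:R%:E <= y) -> y = +oo.
Proof.
case: y => [r | // | /(_ 0%N)//] ub; have := ub (Num.Def.trunc r).+1.
by rewrite lee_fin leNgt truncnS_gt.
Qed.

Lemma limn_esup_pinfty (u : (\bar R)^nat) :
  (forall N M : nat, exists2 k, (N <= k)%N & M%:R%:E <= u k) -> limn_esup u = +oo.
Proof.
move=> ub; rewrite limn_esup_lim.
have -> : esups u = cst +oo.
  apply/funext => N; apply: natr_ubound_pinfty => M; have [k le_Nk le_Mu] := ub N M.
  by apply: le_ereal_sup_tmp; exists (u k) => //; exists k.
exact: (lim_cst (@ereal_hausdorff R)).
Qed.

Lemma Eexp_wrep_ge (T : eqType) (t : seq T) n : t != [::] ->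
  n%:R%:E <= Eexp R (wrep t n).
Proof.
case: t => [|a s] // _; apply: ereal_sup_ubound.
exists (n * size (a :: s))%N, (a :: s), a; split; rewrite ?wpow_wrep //.
by rewrite natrM mulfK // pnatr_eq0.
Qed.

End ExtendedReals.

Theorem lemma15 (R : realType) (Sigma Gamma : finType) (w : nat -> Sigma)
  (h : Sigma -> seq Gamma) :
  injective (morph h) ->
  (exists x : seq Gamma, x != [::] /\ forall l : nat, factor_of_image h w (wrep x l)) ->
  ACE R w = +oo%E.
Proof.
move=> h_inj [x [x_neq0 /(long_power_factor h_inj x_neq0) long_pow]].
apply: limn_esup_pinfty => N M.
have [i [t [k [t_neq0 le_k seg_ik]]]] := long_pow (maxn N M).
have t_gt0 : (0 < size t)%N by rewrite lt0n size_eq0.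
exists (k * size t)%N.
  by rewrite (leq_trans (leq_maxl N M)) // (leq_trans le_k) ?leq_pmulr.
apply: le_ereal_sup_tmp; exists (Eexp R (wrep t k)).
  by exists (wrep t k) => //; exists i; rewrite -seg_ik.
apply: le_trans (Eexp_wrep_ge R k t_neq0); rewrite lee_fin ler_nat.
exact: leq_trans (leq_maxr N M) le_k.
Qed.
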